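(* Let $K\subset\mathbb R^n$ be compact and $B\subset\mathbb R^m$ a closed ball centred at the origin. Let $f,g:K\to B$ be continuous maps such that for every $x\in K$ there is $\lambda>0$ (depending on $x$) with $f(x)=\lambda\cdot g(x)$. If $g$ has convex fibres and $g(K)=B$, then $f(K)\supset\delta\cdot B$ for some $\delta>0$. *)

(* The topology on 'rV is the
   product topology, which coincides with the Euclidean one; the *norm* on
   'rV in MathComp-Analysis is the sup norm, so the Euclidean norm and the
   Euclidean closed ball are defined explicitly here. *)
From HB Require Import structures.
From mathcomp Require Import all_boot all_order all_algebra.
From mathcomp Require Import all_classical all_reals all_analysis.
Set Implicit Arguments. Unset Strict Implicit. Unset Printing Implicit Defensive.
Import Order.TTheory GRing.Theory Num.Theory numFieldNormedType.Exports.
Local Open Scope classical_set_scope.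
Local Open Scope ring_scope.

Definition enorm {R : realType} {m : nat} (v : 'rV[R]_m) : R :=
  Num.sqrt (\sum_(i < m) v ord0 i ^+ 2).

Definition eball0 {R : realType} (m : nat) (r : R) : set 'rV[R]_m :=
  [set y | enorm y <= r].

Definition convex_set_rV {R : realType} {n : nat} (S : set 'rV[R]_n) : Prop :=
  forall x y : 'rV[R]_n, S x -> S y -> forall t : R, 0 <= t -> t <= 1 ->
    S (t *: x + (1 - t) *: y).

Definition convex_fibres {R : realType} {n m : nat}
  (K : set 'rV[R]_n) (g : 'rV[R]_n -> 'rV[R]_m) : Prop :=
  forall y : 'rV[R]_m, convex_set_rV [set x | K x /\ g x = y].

Arguments eball0 {R} m r _.

From HB Require Import structures.
From mathcomp Require Import all_boot all_order all_algebra.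
From mathcomp Require Import all_classical all_reals all_analysis.
From mathcomp Require Import ring.
Import Order.TTheory GRing.Theory Num.Theory numFieldNormedType.Exports.
Local Open Scope classical_set_scope.
Local Open Scope ring_scope.

(* Scaling a point y <> 0 of the ball to e := (r / |y|) y on the sphere, it
   suffices to find s e in f(K) for every 0 <= s <= delta.  Over the segment
   [0, e], which lies in g(K), f is the multiple psi(x) e with
   psi(x) = <f x, e> / r^2.  psi vanishes over 0 and is at least delta over e,
   where delta r^2 is the minimum over K of <f, g> + r^2 - |g|^2: this function
   is positive (it is r^2 where g = 0 and exceeds lam |g|^2 elsewhere) and equals
   <f, g> where |g| = r.  The images under g of {psi <= s} and {psi >= s} are
   compact and cover the connected segment, so they share a point t e; the fibre
   over t e is convex, so psi takes the value s on it, where then f = s e. *)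

Definition edot {R : realType} {m : nat} (u v : 'rV[R]_m) : R :=
  \sum_(i < m) u ord0 i * v ord0 i.

Section EuclideanNorm.
Context {R : realType} {m : nat}.
Implicit Types (u v : 'rV[R]_m) (c : R).

Lemma edotZl c u v : edot (c *: u) v = c * edot u v.
Proof. by rewrite /edot mulr_sumr; apply: eq_bigr => i _; rewrite mxE mulrA. Qed.

Lemma edotZr c u v : edot u (c *: v) = c * edot u v.
Proof. by rewrite /edot mulr_sumr; apply: eq_bigr => i _; rewrite mxE mulrCA. Qed.

Lemma edot0l v : edot 0 v = 0.
Proof. by rewrite /edot big1 // => i _; rewrite mxE mul0r. Qed.

Lemma edot_self_ge0 v : 0 <= edot v v.
Proof. by apply: sumr_ge0 => i _; rewrite -expr2 sqr_ge0. Qed.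

Lemma enorm_sqr v : enorm v ^+ 2 = edot v v.
Proof. by rewrite sqr_sqrtr // sumr_ge0 // => i _; rewrite sqr_ge0. Qed.

Lemma enorm_ge0 v : 0 <= enorm v.
Proof. exact: sqrtr_ge0. Qed.

Lemma enorm_gt0 v : (0 < enorm v) = (v != 0).
Proof.
rewrite sqrtr_gt0 lt_def edot_self_ge0 andbT; apply/negb_inj; rewrite !negbK.
apply/eqP/eqP => [v0|->]; last exact: edot0l.
apply/rowP => i; rewrite mxE; apply/eqP; rewrite -sqrf_eq0 expr2; apply/eqP.
by apply: (psumr_eq0P _ v0) => // j _; rewrite sqr_ge0.
Qed.

Lemma enormZ c v : enorm (c *: v) = `|c| * enorm v.
Proof.
rewrite /enorm -sqrtr_sqr -sqrtrM ?sqr_ge0 // mulr_sumr.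
by congr Num.sqrt; apply: eq_bigr => i _; rewrite mxE exprMn.
Qed.

End EuclideanNorm.

Lemma cvg_edot {R : realType} {m : nat} {T : Type} (F : set_system T) {FF : Filter F}
    (u_ v_ : T -> 'rV[R]_m) (u v : 'rV[R]_m) :
  u_ @ F --> u -> v_ @ F --> v -> edot (u_ x) (v_ x) @[x --> F] --> edot u v.
Proof.
move=> cu cv; apply: (@cvg_big R _ +%R 0 xpredT _ _ F _
  (fun i x => u_ x ord0 i * v_ x ord0 i)) => //; first exact: add_continuous.
move=> i _; apply: cvgM.
- apply: (cvg_comp _ (fun M : 'rV[R]_m => M ord0 i) cu); exact: coord_continuous.
- apply: (cvg_comp _ (fun M : 'rV[R]_m => M ord0 i) cv); exact: coord_continuous.
Qed.

Lemma connected_closed_cover_meet {T : topologicalType} {S L U : set T} :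
  connected S -> closed L -> closed U -> S `<=` L `|` U ->
  S `&` L !=set0 -> S `&` U !=set0 -> S `&` L `&` U !=set0.
Proof.
move=> Sconn Lcl Ucl SLU SL0 [x [Sx Ux]]; apply: contrapT => noLU.
have SL_S : S `&` L = S.
  apply: Sconn => //; last by exists L.
  exists (~` U); first exact: closed_openC.
  apply/seteqP; split=> [y [Sy Ly]|y [Sy nUy]].
  - by split=> // Uy; apply: noLU; exists y.
  - by split=> //; case: (SLU y Sy).
have [_ Lx] : (S `&` L) x by rewrite SL_S.
by apply: noLU; exists x.
Qed.

Lemma compact_image_preimage {X Y Z : topologicalType} {K : set X}
    {g : X -> Y} {h : X -> Z} {P : set Z} :
  compact K -> {within K, continuous g} -> {within K, continuous h} ->
  closed P -> compact (g @` (K `&` h @^-1` P)).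
Proof.
move=> Kc gc hc Pcl; set C := (fun x => (g x, h x)) @` K.
have Cc : compact C.
  apply: continuous_compact Kc => x.
  by apply: (@cvg_pair _ _ _ _ (nbhs (g x)) (nbhs (h x))); [exact: gc|exact: hc].
have -> : g @` (K `&` h @^-1` P) = fst @` (C `&` snd @^-1` P).
  apply/seteqP; split=> [_ [x [Kx Px] <-]|_ [_ [[x Kx <-] Px] <-]].
  - by exists (g x, h x) => //; split=> //; exists x.
  - by exists x.
apply: continuous_compact; first by apply: continuous_subspaceT => p; exact: cvg_fst.
by apply: compact_closedI Cc _; apply: preimage_closed Pcl => p _; exact: cvg_snd.
Qed.

Lemma convex_fibre_ivt {R : realType} {n m : nat} {K : set 'rV[R]_n}
    {g : 'rV[R]_n -> 'rV[R]_m} {h : 'rV[R]_n -> R} {a b : 'rV[R]_n} {s : R} :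
  convex_fibres K g -> {within K, continuous h} ->
  K a -> K b -> g a = g b -> h a <= s <= h b ->
  exists2 z, K z & g z = g a /\ h z = s.
Proof.
move=> gconv hc Ka Kb gab sab.
set J := (fun t : R => t *: a + (1 - t) *: b) @` `[0, 1].
have J_fibre : J `<=` [set z | K z /\ g z = g a].
  move=> _ [t + <-]; rewrite /= in_itv /= => /andP[t0 t1].
  exact: gconv (conj Ka erefl) (conj Kb (esym gab)) t t0 t1.
have Jconn : connected J.
  apply: connected_continuous_connected; first exact: segment_connected.
  apply: continuous_subspaceT => t.
  by apply: cvgD; apply: cvgZ; do ?[exact: cvg_id|exact: cvg_cst|apply: cvgB].
have /connected_intervalP hJ : connected (h @` J).
  apply: connected_continuous_connected Jconn _.
  by apply: continuous_subspaceW hc => z /J_fibre[].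
have Ja : J a by exists 1; rewrite ?scale1r ?subrr ?scale0r ?addr0 //= in_itv /= ler01 lexx.
have Jb : J b by exists 0; rewrite ?scale0r ?subr0 ?scale1r ?add0r //= in_itv /= ler01 lexx.
have [z Jz <-] := hJ (h a) (h b) (ex_intro2 _ _ a Ja erefl) (ex_intro2 _ _ b Jb erefl) s sab.
by have [Kz gz] := J_fibre z Jz; exists z.
Qed.

Section RayThroughImage.
Context {R : realType} {n m : nat} {K : set 'rV[R]_n} {f g : 'rV[R]_n -> 'rV[R]_m}.
Hypotheses (Kc : compact K) (fc : {within K, continuous f}) (gc : {within K, continuous g}).
Hypothesis f_mul_g : forall x, K x -> exists lam : R, f x = lam *: g x.
Hypothesis gconv : convex_fibres K g.

Lemma f_eq0 x : K x -> g x = 0 -> f x = 0.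
Proof. by move=> Kx gx0; have [lam ->] := f_mul_g x Kx; rewrite gx0 scaler0. Qed.

Lemma ray_point_in_image (e w : 'rV[R]_m) (s : R) :
  edot e w = 1 -> (fun t => t *: e) @` `[0, 1] `<=` g @` K ->
  0 <= s -> (forall x, K x -> g x = e -> s <= edot (f x) w) ->
  exists2 z, K z & f z = s *: e.
Proof.
move=> ew segK s_ge0 s_le.
set psi := fun x => edot (f x) w.
have psic : {within K, continuous psi}.
  by move=> x; apply: cvg_edot; [exact: fc|exact: cvg_cst].
have f_on_ray x t : K x -> g x = t *: e -> f x = psi x *: e.
  move=> Kx gx; have [lam fx] := f_mul_g x Kx.
  by rewrite /psi fx gx scalerA edotZl ew mulr1.
set Seg := (fun t : R => t *: e) @` `[0, 1].
set L := g @` (K `&` psi @^-1` [set u | u <= s]).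
set U := g @` (K `&` psi @^-1` [set u | s <= u]).
have image_closed P : closed P -> closed (g @` (K `&` psi @^-1` P)).
  move=> Pcl; apply: compact_closed; first exact: norm_hausdorff.
  exact: compact_image_preimage.
have Seg0 : Seg (0 *: e) by exists 0; rewrite //= in_itv /= lexx ler01.
have Seg1 : Seg (1 *: e) by exists 1; rewrite //= in_itv /= lexx ler01.
have [v [[[t _ <-] [xa [Kxa sa] ga]] [xb [Kxb sb] gb]]] : Seg `&` L `&` U !=set0.
  apply: connected_closed_cover_meet.
  - apply: connected_continuous_connected; first exact: segment_connected.
    by apply: continuous_subspaceT => t; apply: cvgZ; [exact: cvg_id|exact: cvg_cst].
  - exact/image_closed/closed_le.
  - exact/image_closed/closed_ge.
  - move=> _ /segK [x Kx <-].
    by case: (leP (psi x) s) => sx; [left|right]; exists x => //; split=> //; apply: ltW.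
  - have [x0 Kx0 gx0] := segK _ Seg0.
    exists (0 *: e); split=> //.
    by exists x0 => //; split=> //; rewrite /psi /= f_eq0 // ?edot0l // gx0 scale0r.
  - have [x1 Kx1 gx1] := segK _ Seg1.
    exists (1 *: e); split=> //.
    by exists x1 => //; split=> //; apply: s_le; rewrite // gx1 scale1r.
have [z Kz [gz psiz]] := convex_fibre_ivt gconv psic Kxa Kxb (etrans ga (esym gb))
  (ltac:(by rewrite sa sb) : psi xa <= s <= psi xb).
by exists z => //; rewrite (f_on_ray z t Kz) ?psiz // gz ga.
Qed.

Lemma sphere_ray_in_image {r c s : R} {e : 'rV[R]_m} :
  0 < r -> eball0 m r `<=` g @` K ->
  (forall x, K x -> enorm (g x) = r -> c <= edot (f x) (g x)) ->
  enorm e = r -> 0 <= s <= c / r ^+ 2 -> (f @` K) (s *: e).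
Proof.
move=> r_gt0 BgK c_le enorm_e /andP[s_ge0 s_le].
apply: (ray_point_in_image e (r ^- 2 *: e)) => //.
- by rewrite edotZr -enorm_sqr enorm_e mulVf // expf_neq0 // gt_eqF.
- move=> _ [t + <-]; rewrite /= in_itv /= => /andP[t0 t1]; apply: BgK.
  by rewrite /eball0 /= enormZ enorm_e ger0_norm // ler_piMl // ltW.
- move=> x Kx gx; rewrite edotZr -gx mulrC; apply: le_trans s_le _.
  by rewrite ler_wpM2r ?invr_ge0 ?exprn_ge0 ?(ltW r_gt0) ?c_le ?gx.
Qed.

End RayThroughImage.

Lemma sphere_edot_lower_bound {R : realType} {n m : nat} {r : R} {K : set 'rV[R]_n}
    {f g : 'rV[R]_n -> 'rV[R]_m} :
  0 < r -> compact K -> {within K, continuous f} -> {within K, continuous g} ->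
  (forall x, K x -> eball0 m r (g x)) ->
  (forall x, K x -> exists2 lam : R, 0 < lam & f x = lam *: g x) ->
  exists2 c : R, 0 < c & forall x, K x -> enorm (g x) = r -> c <= edot (f x) (g x).
Proof.
move=> r_gt0 Kc fc gc gB f_pos_g.
pose h x := edot (f x) (g x) + (r ^+ 2 - edot (g x) (g x)).
have h_gt0 x : K x -> 0 < h x.
  move=> Kx; have [lam lam_gt0 fx] := f_pos_g x Kx.
  have gx_le : edot (g x) (g x) <= r ^+ 2.
    by rewrite -enorm_sqr ler_pXn2r ?nnegrE ?enorm_ge0 ?(ltW r_gt0) //; exact: gB.
  rewrite /h fx edotZl; have [gx0|gx_neq0] := eqVneq (g x) 0.
    by rewrite gx0 edot0l mulr0 add0r subr0 exprn_gt0.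
  rewrite ltr_pwDl ?subr_ge0 // mulr_gt0 // -enorm_sqr exprn_gt0 //.
  by rewrite enorm_gt0.
have [[x0 Kx0]|K0] := pselect (K !=set0); last first.
  by exists 1 => // x Kx; case: K0; exists x.
have hc : {within K, continuous h}.
  move=> x; apply: cvgD; first by apply: cvg_edot; [exact: fc|exact: gc].
  by apply: cvgB; [exact: cvg_cst|apply: cvg_edot; exact: gc].
have [xmin /set_mem Kxmin hmin] := compact_EVT_min (ex_intro _ x0 Kx0) Kc hc.
exists (h xmin); first exact: h_gt0.
move=> x Kx gx_r; have := hmin x (mem_set Kx).
by rewrite /h -(enorm_sqr (g x)) gx_r subrr addr0.
Qed.

Theorem mainTheorem15 (R : realType) (n m : nat) (r : R)
  (K : set 'rV[R]_n) (f g : 'rV[R]_n -> 'rV[R]_m) :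
  compact K ->
  {within K, continuous f} -> {within K, continuous g} ->
  (forall x, K x -> eball0 m r (f x)) ->
  (forall x, K x -> eball0 m r (g x)) ->
  (forall x, K x -> exists2 lam : R, 0 < lam & f x = lam *: g x) ->
  convex_fibres K g ->
  g @` K = eball0 m r ->
  exists2 delta : R, 0 < delta &
    [set delta *: y | y in eball0 m r] `<=` f @` K.
Proof.
move=> Kc fc gc _ gB f_pos_g gconv gK.
have f_mul_g x : K x -> exists lam : R, f x = lam *: g x.
  by move=> Kx; have [lam _ ->] := f_pos_g x Kx; exists lam.
have f_image0 : eball0 m r 0 -> (f @` K) 0.
  by rewrite -gK => -[x Kx gx0]; exists x => //; apply: (f_eq0 f_mul_g).
have [r_gt0|r_le0] := ltP 0 r; last first.
  exists 1 => // _ [y yB <-].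
  have y0 : y = 0 by apply/eqP; rewrite -[_ == _]negbK -enorm_gt0 -leNgt (le_trans yB).
  by move: yB; rewrite y0 scaler0; exact: f_image0.
have [c c_gt0 c_le] := sphere_edot_lower_bound r_gt0 Kc fc gc gB f_pos_g.
exists (c / r ^+ 2) => [|_ [y yB <-]]; first by rewrite divr_gt0 ?exprn_gt0.
have [y0|y_neq0] := eqVneq y 0.
  by move: yB; rewrite y0 scaler0; exact: f_image0.
have ny_gt0 : 0 < enorm y by rewrite enorm_gt0.
have -> : (c / r ^+ 2) *: y = (c / r ^+ 2 * (enorm y / r)) *: ((r / enorm y) *: y).
  by rewrite scalerA; congr (_ *: _); field; rewrite !gt_eqF.
apply: (sphere_ray_in_image Kc fc gc f_mul_g gconv r_gt0 _ c_le).
- by rewrite gK.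
- by rewrite enormZ ger0_norm ?divr_ge0 ?ltW // divfK ?gt_eqF.
- rewrite mulr_ge0 ?divr_ge0 ?exprn_ge0 ?enorm_ge0 ?(ltW c_gt0) ?(ltW r_gt0) //=.
  rewrite ler_piMr ?divr_ge0 ?exprn_ge0 ?(ltW c_gt0) ?(ltW r_gt0) // ler_pdivrMr // mul1r.
  exact: yB.
Qed.
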